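(* Let $(X,+)$ be an abelian group, $(g,\gamma)$ a construction pair on $(X,+)$, and $C=\langle b\rangle$ a cyclic group such that, if $C$ is finite, both $|g|$ and $r(g,\gamma)$ divide $|C|$. Then the set $C\times X$ with multiplication $$(b^i,x)\cdot(b^j,y)=\Big(b^{i+j},\ g^{-j}(x)+y+\sum_{k\in I(i+j,-j)}g^{-k}(\gamma(x,y))\Big)$$ is a (well-defined) Moufang loop $Q=C\ltimes_{(g,\gamma)}X$ with neutral element $(1,0)$ and inverses $(b^i,x)^{-1}=(b^{-i},-g^i(x))$.
   Context: Let $(X,+)$ be an abelian group. A map $\gamma:X\times X\to X$ is symmetric if $\gamma(x,y)=\gamma(y,x)$, alternating if $\gamma(x,x)=0$, biadditive if additive in each argument. Its radical is $\mathrm{Rad}(\gamma)=\{x\in X:\gamma(x,y)=0\text{ for all }y\in X\}$. A construction pair on $(X,+)$ is a pair $(g,\gamma)$ where $g$ is a permutation of $X$ and $\gamma:X\times X\to X$ is symmetric, alternating and biadditive, such that for all $x,y,z\in X$: (C1) $g^{-1}(g(x)+g(y))=x+y+\gamma(x,y)+g^{-1}(\gamma(x,y))+g^{-2}(\gamma(x,y))$; (C2) $\gamma(\gamma(x,y),z)=0$; (C3) $g^{-1}(\gamma(x,y))=\gamma(g(x),y)$. For integers $i,j$ the interval $I(i,j)\subseteq\mathbb Z$ is $\emptyset$ if $i=j$, $\{i,\dots,j-1\}$ if $i<j$, and $\{j,\dots,i-1\}$ if $j<i$. $r(g,\gamma)$ is the least positive integer $r$ such that $\sum_{0\le k<r}g^k(x)\in\mathrm{Rad}(\gamma)$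 for all $x\in X$, or $\infty$ if none exists. A loop is Moufang if it satisfies $xy\cdot zx=(x\cdot yz)x$ for all $x,y,z$. *)

From HB Require Import structures.
From mathcomp Require Import all_boot all_order all_algebra.
Set Implicit Arguments. Unset Strict Implicit. Unset Printing Implicit Defensive.
Import Order.TTheory GRing.Theory Num.Theory.
Local Open Scope ring_scope.

Section Defs.
Variable X : zmodType.

Definition gpow (g ginv : X -> X) (k : int) : X -> X :=
  match k with
  | Posz m => iter m g
  | Negz m => iter m.+1 ginv
  end.

Definition symmetric_map (gam : X -> X -> X) := forall x y, gam x y = gam y x.
Definition alternating_map (gam : X -> X -> X) := forall x, gam x x = 0.
Definition biadditive (gam : X -> X -> X) :=
  (forall x x' y, gam (x + x') y = gam x y + gam x' y) /\
  (forall x y y', gam x (y + y') = gam x y + gam x y').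

Definition Rad (gam : X -> X -> X) (x : X) : Prop := forall y, gam x y = 0.

Definition construction_pair (g ginv : X -> X) (gam : X -> X -> X) : Prop :=
  [/\ cancel g ginv /\ cancel ginv g,
      symmetric_map gam /\ alternating_map gam /\ biadditive gam,
      (forall x y, ginv (g x + g y) =
          x + y + gam x y + ginv (gam x y) + ginv (ginv (gam x y))),
      (forall x y z, gam (gam x y) z = 0) &
      (forall x y, ginv (gam x y) = gam (g x) y)].

Definition perm_order_is (g : X -> X) (d : nat) : Prop :=
  (0 < d)%N /\ (forall x, iter d g x = x) /\
  (forall k, (0 < k < d)%N -> ~ (forall x, iter k g x = x)).

Definition r_is (g : X -> X) (gam : X -> X -> X) (r : nat) : Prop :=
  (0 < r)%N /\ (forall x, Rad gam (\sum_(0 <= k < r) iter k g x)) /\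
  (forall k, (0 < k < r)%N -> ~ (forall x, Rad gam (\sum_(0 <= k' < k) iter k' g x))).
End Defs.

Definition Iint (i j : int) : seq int :=
  if i == j then [::]
  else if i < j then [seq i + (k%:Z) | k <- iota 0 `|j - i|%N]
  else [seq j + (k%:Z) | k <- iota 0 `|i - j|%N].

Definition raw_mul (X : zmodType) (g ginv : X -> X) (gam : X -> X -> X)
  (p q : int * X) : int * X :=
  let: (i, x) := p in let: (j, y) := q in
  (i + j, gpow g ginv (- j) x + y +
          \sum_(k <- Iint (i + j) (- j)) gpow g ginv (- k) (gam x y)).

(* C = <b> cyclic of order n (n = 0 : infinite cyclic); b^i represented by
   the canonical representative i %% n (for n = 0 this is i itself) *)
Definition normC (X : zmodType) (n : nat) (p : int * X) : int * X :=
  ((p.1 %% n%:Z)%Z, p.2).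

Definition Qcarrier (X : zmodType) (n : nat) (p : int * X) : Prop :=
  (p.1 %% n%:Z)%Z = p.1.

Definition Qmul (X : zmodType) (n : nat) (g ginv : X -> X) (gam : X -> X -> X)
  (p q : int * X) : int * X := normC n (raw_mul g ginv gam p q).

Definition is_loop (T : Type) (P : T -> Prop) (mul : T -> T -> T) (e : T) : Prop :=
  [/\ P e, (forall a b, P a -> P b -> P (mul a b)),
      (forall a, P a -> mul e a = a /\ mul a e = a),
      (forall a b, P a -> P b -> exists x, [/\ P x, mul a x = b &
                    forall x', P x' -> mul a x' = b -> x' = x]) &
      (forall a b, P a -> P b -> exists y, [/\ P y, mul y a = b &
                    forall y', P y' -> mul y' a = b -> y' = y])].

Definition is_moufang_loop (T : Type) (P : T -> Prop) (mul : T -> T -> T) (e : T) :=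
  is_loop P mul e /\
  forall x y z, P x -> P y -> P z ->
    mul (mul x y) (mul z x) = mul (mul x (mul y z)) x.

From HB Require Import structures.
From mathcomp Require Import all_boot all_order all_algebra.
From mathcomp Require Import ring zify.
Set Implicit Arguments. Unset Strict Implicit. Unset Printing Implicit Defensive.
Import Order.TTheory GRing.Theory Num.Theory.
Local Open Scope ring_scope.

(* Call w [rad2] if it lies in Rad(gam) and w + w = 0.  By (C2) and alternation
   every value of gam is rad2, and by (C1), (C3) the powers g^k are additive up to
   rad2 terms:
     g^k (p + q) = g^k p + g^k q + sum_(m in I(k+1, 1-2k)) g^m (gam p q).
   So a product of three elements (b^i,x), (b^j,y), (b^l,z) has a normal form:
   an integer affine in i, j, l, together with a sum of powers of g applied to
   x, y, z and of interval sums of powers of g applied to values of gam, with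
   interval bounds affine in i, j, l.  The Moufang identity reduces to comparing
   two such normal forms, a finite computation in which equal rad2 terms cancel
   in pairs.  Reducing b^i modulo n = |C| is compatible with the product since
   g^n = 1 and the interval sums are n-periodic, the sum of gam-values over a
   period lying in the radical as r(g,gam) divides n.  Both divisions are solved
   explicitly: the correction term of a product is additive and squares to zero
   in either factor. *)

Lemma int_ind_step (P : int -> Prop) :
  P 0 -> (forall k, P k -> P (k + 1)) -> (forall k, P k -> P (k - 1)) -> forall k, P k.
Proof.
move=> P0 PS PP; elim/int_ind => [//|n|n].
  by move/PS; rewrite -[n.+1]addn1 PoszD.
by move/PP; rewrite -[n.+1]addn1 PoszD opprD.
Qed.

Lemma iter_period (T : Type) (f : T -> T) (d n : nat) :
  (forall x, iter d f x = x) -> (d %| n)%N -> forall x, iter n f x = x.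
Proof. by move=> fd /dvdnP [k ->] x; rewrite iterM; apply: iter_fix. Qed.

Fixpoint cancel_pairs (T : eqType) (s : seq T) : seq T :=
  if s is t :: s' then
    let c := cancel_pairs s' in if t \in c then rem t c else t :: c
  else [::].

Section IntervalSums.
Variable X : zmodType.

Lemma Iint_le (a b : int) : a <= b ->
  Iint a b = [seq a + (k%:Z) | k <- iota 0 (absz (b - a)%R)].
Proof.
move=> hab; rewrite /Iint; case: eqP => [->|hne]; first by rewrite subrr.
by rewrite lt_neqAle hab andbT; case: eqP.
Qed.

Lemma Iint_ge (a b : int) : b <= a ->
  Iint a b = [seq b + (k%:Z) | k <- iota 0 (absz (a - b)%R)].
Proof.
move=> hab; rewrite /Iint; case: eqP => [->|hne]; first by rewrite subrr.
by rewrite ltNge hab.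
Qed.

Lemma Iint_nil (a : int) : Iint a a = [::].
Proof. by rewrite /Iint eqxx. Qed.

Lemma step_invariant_const (D : int -> X) : (forall p, D (p + 1) = D p) ->
  forall p q, D p = D q.
Proof.
move=> hD; suff h0 : forall p, D p = D 0 by move=> p q; rewrite h0 (h0 q).
apply: int_ind_step => // k IH; first by rewrite hD.
by rewrite -IH -[in RHS](subrK 1 k) hD.
Qed.

Lemma sum_twice (T : Type) (s : seq T) (F : T -> X) : (forall t, F t + F t = 0) ->
  \sum_(t <- s) F t + \sum_(t <- s) F t = 0.
Proof.
move=> F2; elim: s => [|t s IH]; first by rewrite big_nil addr0.
by rewrite big_cons addrACA F2 IH addr0.
Qed.

Lemma sum_cancel_pairs (T : eqType) (s : seq T) (F : T -> X) :
  (forall t, F t + F t = 0) -> \sum_(t <- cancel_pairs s) F t = \sum_(t <- s) F t.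
Proof.
move=> F2; elim: s => [//|t s IH] /=; case: ifP => [hin|_]; last by rewrite !big_cons IH.
by rewrite big_cons -IH (big_rem t hin) /= addrA F2 add0r.
Qed.

Lemma solve_addr_nilpotent (h : X -> X) : {morph h : a b / a + b} ->
  (forall t, h (h t) = 0) -> (forall t, h t + h t = 0) ->
  forall y w, y + h y = w <-> y = w + h w.
Proof.
by move=> hD hh h2 y w; split=> [<-|->]; rewrite hD hh addr0 -addrA h2 addr0.
Qed.

(* Only interval sums of 2-torsion terms are needed, and for these the
   orientation of an interval is irrelevant. *)
Lemma sum_IintSr (f : int -> X) (a b : int) : (forall k, f k + f k = 0) ->
  \sum_(m <- Iint a (b + 1)) f m = \sum_(m <- Iint a b) f m + f b.
Proof.
move=> f2; case: (lerP a b) => hab.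
  rewrite Iint_le ?Iint_le //; last by lia.
  have -> : absz (b + 1 - a)%R = (absz (b - a)%R).+1 by lia.
  rewrite -addn1 iotaD map_cat big_cat /= big_cons big_nil addr0 add0n.
  by congr (_ + f _); lia.
rewrite (Iint_ge (ltW hab)) Iint_ge; last by lia.
have -> : absz (a - b)%R = (absz (a - (b + 1))%R).+1 by lia.
rewrite /= big_cons.
have -> : \sum_(j <- [seq b + k%:Z | k <- iota 1 (absz (a - (b + 1))%R)]) f j =
          \sum_(j <- [seq b + 1 + k%:Z | k <- iota 0 (absz (a - (b + 1))%R)]) f j.
  rewrite (iotaDl 1 0) -map_comp !big_map; apply: eq_bigr => k _ /=.
  by congr f; lia.
by rewrite addr0 [RHS]addrC addrA f2 add0r.
Qed.

Lemma sum_Iint_split (f : int -> X) (a b : int) : (forall k, f k + f k = 0) ->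
  \sum_(m <- Iint a b) f m = \sum_(m <- Iint 0 a) f m + \sum_(m <- Iint 0 b) f m.
Proof.
move=> f2; apply/eqP; rewrite -subr_eq0; apply/eqP; move: b.
pose D b := \sum_(m <- Iint a b) f m - (\sum_(m <- Iint 0 a) f m + \sum_(m <- Iint 0 b) f m).
move=> b; rewrite -/(D b) (@step_invariant_const D _ b a).
  by rewrite /D Iint_nil big_nil sum_twice // subr0.
move=> p; rewrite /D !sum_IintSr //.
by rewrite [X in _ - X]addrA [X in _ - X]addrC addrKA.
Qed.

Lemma sum_Iint_shift (f : int -> X) (a b c : int) : (forall k, f k + f k = 0) ->
  \sum_(m <- Iint a b) f (m + c) = \sum_(m <- Iint (a + c) (b + c)) f m.
Proof.
move=> f2; apply/eqP; rewrite -subr_eq0; apply/eqP; move: b.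
pose D b := \sum_(m <- Iint a b) f (m + c) - \sum_(m <- Iint (a + c) (b + c)) f m.
move=> b; rewrite -/(D b) (@step_invariant_const D _ b a).
  by rewrite /D !Iint_nil !big_nil subrr.
move=> p; rewrite /D sum_IintSr; last by move=> k; apply: f2.
by rewrite (addrAC p 1 c) sum_IintSr // opprD addrACA subrr addr0.
Qed.

Lemma sum_Iint_opp (f : int -> X) (a b : int) : (forall k, f k + f k = 0) ->
  \sum_(m <- Iint a b) f (- m) = \sum_(m <- Iint (1 - a) (1 - b)) f m.
Proof.
move=> f2; apply/eqP; rewrite -subr_eq0; apply/eqP; move: b.
pose D b := \sum_(m <- Iint a b) f (- m) - \sum_(m <- Iint (1 - a) (1 - b)) f m.
move=> b; rewrite -/(D b) (@step_invariant_const D _ b a).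
  by rewrite /D !Iint_nil !big_nil subrr.
move=> p; rewrite /D sum_IintSr; last by move=> k; apply: f2.
have -> : 1 - p = (1 - (p + 1)) + 1 by ring.
rewrite (@sum_IintSr f (1 - a) (1 - (p + 1))) // (_ : 1 - (p + 1) = - p); last by ring.
have nf : - f (- p) = f (- p) by rewrite -[LHS]add0r -(f2 (- p)) addrK.
by rewrite opprD nf addrA addrAC.
Qed.
End IntervalSums.

(* A [lin] (a, b, c, d) stands for the integer a*i + b*j + c*l + d, and the
   variables x, y, z are numbered 0, 1, 2.  A normal form (A, (ps, ss)) stands
   for the element (A, sum of G^a v over (a, v) in ps + sum of
   isum 0 a (gam v v') over (a, (v, v')) in ss) of the loop. *)
Definition lin := (int * int * int * int)%type.
Definition lin_add (a b : lin) : lin :=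
  (a.1.1.1 + b.1.1.1, a.1.1.2 + b.1.1.2, a.1.2 + b.1.2, a.2 + b.2).
Definition lin_opp (a : lin) : lin := (- a.1.1.1, - a.1.1.2, - a.1.2, - a.2).
Definition lin_const (c : int) : lin := (0, 0, 0, c).
Definition lin_eval (r : int * int * int) (a : lin) : int :=
  a.1.1.1 * r.1.1 + a.1.1.2 * r.1.2 + a.1.2 * r.2 + a.2.

Lemma lin_evalD r a b : lin_eval r (lin_add a b) = lin_eval r a + lin_eval r b.
Proof. by rewrite /lin_eval /lin_add /=; ring. Qed.
Lemma lin_evalN r a : lin_eval r (lin_opp a) = - lin_eval r a.
Proof. by rewrite /lin_eval /lin_opp /=; ring. Qed.
Lemma lin_eval_const r c : lin_eval r (lin_const c) = c.
Proof. by rewrite /lin_eval /lin_const /=; ring. Qed.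

Definition pterm := (lin * nat)%type.
Definition gterm := (lin * (nat * nat))%type.
Definition nf := (lin * (seq pterm * seq gterm))%type.

Definition nf_gam (a b : seq pterm) : seq gterm :=
  flatten [seq [seq (lin_opp (lin_add t.1 u.1), (minn t.2 u.2, maxn t.2 u.2))
               | u <- b & u.2 != t.2] | t <- a].
Definition nf_isum (a b : lin) (ps : seq gterm) : seq gterm :=
  flatten [seq [:: (lin_add a p.1, p.2); (lin_add b p.1, p.2)] | p <- ps].
Definition nf_gpow_isums (k : lin) (ss : seq gterm) : seq gterm :=
  flatten [seq [:: (k, t.2); (lin_add k t.1, t.2)] | t <- ss].
Fixpoint nf_gpow (k : lin) (ps : seq pterm) : seq pterm * seq gterm :=
  if ps is t :: ps' then
    let e := nf_gpow k ps' in
    ((lin_add k t.1, t.2) :: e.1,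
     nf_isum (lin_add k (lin_const 1)) (lin_add (lin_const 1) (lin_opp (lin_add k k)))
       (nf_gam [:: t] ps') ++ e.2)
  else ([::], [::]).
Definition nf_mul (A B : nf) : nf :=
  let e := nf_gpow (lin_opp B.1) A.2.1 in
  (lin_add A.1 B.1, (e.1 ++ B.2.1,
     e.2 ++ (nf_gpow_isums (lin_opp B.1) A.2.2 ++ (B.2.2 ++
     nf_isum (lin_add (lin_const 1) (lin_opp (lin_add A.1 B.1))) (lin_add (lin_const 1) B.1)
       (nf_gam A.2.1 B.2.1))))).

(* Sufficient for equal values: the isum terms are 2-torsion, and those with
   a zero bound vanish. *)
Definition nf_body_eqb (A B : seq pterm * seq gterm) :=
  perm_eq A.1 B.1 &&
  perm_eq (cancel_pairs [seq t <- A.2 | t.1 != lin_const 0])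
          (cancel_pairs [seq t <- B.2 | t.1 != lin_const 0]).

Definition nf_x : nf := ((1, 0, 0, 0), ([:: ((0, 0, 0, 0), 0%N)], [::])).
Definition nf_y : nf := ((0, 1, 0, 0), ([:: ((0, 0, 0, 0), 1%N)], [::])).
Definition nf_z : nf := ((0, 0, 1, 0), ([:: ((0, 0, 0, 0), 2%N)], [::])).

Lemma nf_moufang_index :
  (nf_mul (nf_mul nf_x nf_y) (nf_mul nf_z nf_x)).1 =
  (nf_mul (nf_mul nf_x (nf_mul nf_y nf_z)) nf_x).1.
Proof. by vm_compute. Qed.
Lemma nf_moufang_body :
  nf_body_eqb (nf_mul (nf_mul nf_x nf_y) (nf_mul nf_z nf_x)).2
              (nf_mul (nf_mul nf_x (nf_mul nf_y nf_z)) nf_x).2.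
Proof. by vm_compute. Qed.

Section ConstructionPair.
Variables (X : zmodType) (g ginv : X -> X) (gam : X -> X -> X).
Hypotheses (gK : cancel g ginv) (ginvK : cancel ginv g).
Hypotheses (gsym : forall x y, gam x y = gam y x) (galt : forall x, gam x x = 0).
Hypotheses (gDl : forall x x' y, gam (x + x') y = gam x y + gam x' y)
           (gDr : forall x y y', gam x (y + y') = gam x y + gam x y').
Hypothesis C1 : forall x y, ginv (g x + g y) =
          x + y + gam x y + ginv (gam x y) + ginv (ginv (gam x y)).
Hypothesis C2 : forall x y z, gam (gam x y) z = 0.
Hypothesis C3 : forall x y, ginv (gam x y) = gam (g x) y.

Local Notation G := (gpow g ginv).
Local Notation rad := (Rad gam).

Lemma gam0l y : gam 0 y = 0.
Proof. by apply: (addrI (gam 0 y)); rewrite -gDl !addr0. Qed.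
Lemma gam0r y : gam y 0 = 0.
Proof. by rewrite gsym gam0l. Qed.
Lemma gamNl x y : gam (- x) y = - gam x y.
Proof. by apply/eqP; rewrite -addr_eq0 -gDl addNr gam0l. Qed.
Lemma gamNr x y : gam x (- y) = - gam x y.
Proof. by rewrite gsym gamNl gsym. Qed.
Lemma gam_double x y : gam x y + gam x y = 0.
Proof. by have := galt (x + y); rewrite gDl !gDr !galt add0r addr0 gsym. Qed.
Lemma gam_suml (T : Type) (s : seq T) (F : T -> X) y :
  gam (\sum_(t <- s) F t) y = \sum_(t <- s) gam (F t) y.
Proof.
elim: s => [|t s IH]; first by rewrite !big_nil gam0l.
by rewrite !big_cons gDl IH.
Qed.
Lemma gam_sumr (T : Type) (s : seq T) (F : T -> X) y :
  gam y (\sum_(t <- s) F t) = \sum_(t <- s) gam y (F t).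
Proof. by rewrite gsym gam_suml; apply: eq_bigr => t _; rewrite gsym. Qed.

Lemma ginv0 : ginv 0 = 0.
Proof. by have := C3 0 0; rewrite !gam0r. Qed.
Lemma g0 : g 0 = 0.
Proof. by rewrite -{1}ginv0 ginvK. Qed.

Lemma rad0 : rad 0. Proof. by move=> y; rewrite gam0l. Qed.
Lemma radD u w : rad u -> rad w -> rad (u + w).
Proof. by move=> hu hw y; rewrite gDl hu hw addr0. Qed.
Lemma rad_gam x y : rad (gam x y). Proof. by move=> z; apply: C2. Qed.
Lemma gam_radr w x : rad w -> gam x w = 0. Proof. by move=> hw; rewrite gsym hw. Qed.

Lemma gam_ginv x y : gam (ginv x) y = g (gam x y).
Proof. by rewrite -[in RHS](ginvK x) -C3 ginvK. Qed.
Lemma rad_g w : rad w -> rad (g w).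
Proof. by move=> hw y; rewrite -C3 hw ginv0. Qed.
Lemma rad_ginv w : rad w -> rad (ginv w).
Proof. by move=> hw y; rewrite gam_ginv hw g0. Qed.

Lemma gD_rad a w : rad w -> g (a + w) = g a + g w.
Proof.
move=> hw; have := C1 a w; rewrite (gam_radr _ hw) !ginv0 !addr0 => h.
by rewrite -h ginvK.
Qed.
Lemma ginvD_rad a w : rad w -> ginv (a + w) = ginv a + ginv w.
Proof.
move=> hw; have := C1 (ginv a) (ginv w).
by rewrite !ginvK (gam_radr _ (rad_ginv hw)) !ginv0 !addr0.
Qed.

Lemma gpowS k v : G (k + 1) v = g (G k v).
Proof.
case: k => [m|[|m]]; first by rewrite -PoszD addn1.
  by rewrite /= ginvK.
rewrite (_ : Negz m.+1 + 1 = Negz m); last by rewrite !NegzE; lia.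
by rewrite /= ginvK.
Qed.
Lemma gpowB1 k v : G (k - 1) v = ginv (G k v).
Proof. by rewrite -{2}(subrK 1 k) gpowS gK. Qed.
Lemma gpowD a b v : G (a + b) v = G a (G b v).
Proof.
elim/int_ind_step: a => [|a IH|a IH]; first by rewrite add0r.
  by rewrite (addrAC a 1 b) !gpowS IH.
by rewrite (addrAC a (-1) b) !gpowB1 IH.
Qed.
Lemma gpowK k v : G (- k) (G k v) = v.
Proof. by rewrite -gpowD addNr. Qed.
Lemma gpowKV k v : G k (G (- k) v) = v.
Proof. by rewrite -gpowD subrr. Qed.

Lemma gpow_zero k : G k 0 = 0.
Proof.
elim/int_ind_step: k => [//|k IH|k IH]; first by rewrite gpowS IH g0.
by rewrite gpowB1 IH ginv0.
Qed.
Lemma rad_gpow k w : rad w -> rad (G k w).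
Proof.
move=> hw; elim/int_ind_step: k => [//|k IH|k IH]; first by rewrite gpowS; apply: rad_g.
by rewrite gpowB1; apply: rad_ginv.
Qed.
Lemma gpowD_rad k a w : rad w -> G k (a + w) = G k a + G k w.
Proof.
move=> hw; elim/int_ind_step: k => [//|k IH|k IH].
  by rewrite !gpowS IH gD_rad //; apply: rad_gpow.
by rewrite !gpowB1 IH ginvD_rad //; apply: rad_gpow.
Qed.
Lemma gpow_sum_rad k (T : Type) (s : seq T) (F : T -> X) :
  (forall t, rad (F t)) -> G k (\sum_(t <- s) F t) = \sum_(t <- s) G k (F t).
Proof.
move=> hF; elim: s => [|t s IH]; first by rewrite !big_nil gpow_zero.
by rewrite !big_cons addrC gpowD_rad ?hF // IH addrC.
Qed.
Lemma gam_gpowl k x y : gam (G k x) y = G (- k) (gam x y).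
Proof.
elim/int_ind_step: k x => [|k IH|k IH] x; first by [].
  by rewrite gpowS -C3 IH opprD -gpowB1.
by rewrite gpowB1 gam_ginv IH opprB addrC gpowS.
Qed.
Lemma gam_gpowr k x y : gam x (G k y) = G (- k) (gam x y).
Proof. by rewrite gsym gam_gpowl gsym. Qed.

Definition rad2 (w : X) := rad w /\ w + w = 0.

Lemma rad2_gam x y : rad2 (gam x y).
Proof. by split; [apply: rad_gam | apply: gam_double]. Qed.
Lemma rad2D u w : rad2 u -> rad2 w -> rad2 (u + w).
Proof.
by move=> [hu hu2] [hw hw2]; split; [apply: radD | rewrite addrACA hu2 hw2 addr0].
Qed.
Lemma rad2_gpow k w : rad2 w -> rad2 (G k w).
Proof.
by move=> [hw hw2]; split; [apply: rad_gpow | rewrite -gpowD_rad // hw2 gpow_zero].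
Qed.
Lemma rad2_sum (T : Type) (s : seq T) (F : T -> X) :
  (forall t, rad2 (F t)) -> rad2 (\sum_(t <- s) F t).
Proof.
move=> hF; elim: s => [|t s IH]; last by rewrite big_cons; apply: rad2D.
by rewrite big_nil; split; [apply: rad0 | rewrite addr0].
Qed.
Lemma rad2_opp w : rad2 w -> - w = w.
Proof. by move=> [_ h]; rewrite -[LHS]add0r -h addrK. Qed.
Lemma gpow_double w : rad2 w -> forall m, G m w + G m w = 0.
Proof. by move=> hw m; have [_ ->] := rad2_gpow m hw. Qed.

Definition isum (a b : int) (w : X) := \sum_(m <- Iint a b) G m w.

Lemma isum_nil a w : isum a a w = 0.
Proof. by rewrite /isum Iint_nil big_nil. Qed.
Lemma rad2_isum a b w : rad2 w -> rad2 (isum a b w).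
Proof. by move=> hw; apply: rad2_sum => m; apply: rad2_gpow. Qed.
Lemma isum_split a b w : rad2 w -> isum a b w = isum 0 a w + isum 0 b w.
Proof. by move=> hw; rewrite /isum sum_Iint_split //; apply: gpow_double. Qed.
Lemma isumC a b w : rad2 w -> isum a b w = isum b a w.
Proof. by move=> hw; rewrite (isum_split a) // (isum_split b) // addrC. Qed.
Lemma isum_cat a b c w : rad2 w -> isum a b w + isum b c w = isum a c w.
Proof.
move=> hw; rewrite (isum_split a b) // (isum_split b c) // (isum_split a c) //.
rewrite -addrA (addrA (isum 0 b w)).
by have [_ ->] := rad2_isum 0 b hw; rewrite add0r.
Qed.
Lemma isum_gpow a b s w : rad2 w -> isum a b (G s w) = isum (a + s) (b + s) w.
Proof.
move=> hw; rewrite /isum -sum_Iint_shift; last by apply: gpow_double.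
by apply: eq_bigr => m _; rewrite gpowD.
Qed.
Lemma gpow_isum k a b w : rad2 w -> G k (isum a b w) = isum (a + k) (b + k) w.
Proof.
move=> hw; rewrite /isum gpow_sum_rad; last by move=> m; apply: rad_gpow; case: hw.
rewrite -sum_Iint_shift; last by apply: gpow_double.
by apply: eq_bigr => m _; rewrite -gpowD addrC.
Qed.
Lemma isumD a b u w : rad u -> rad w -> isum a b (u + w) = isum a b u + isum a b w.
Proof.
by move=> hu hw; rewrite /isum -big_split; apply: eq_bigr => m _; rewrite gpowD_rad.
Qed.

Lemma g_add p q : g (p + q) = g p + g q + isum (-1) 2 (gam p q).
Proof.
set c := gam p q; have hc : rad c by apply: rad_gam.
have hc1 : rad (ginv c) by apply: rad_ginv.
have hc2 : rad (ginv (ginv c)) by apply: rad_ginv.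
have hc12 : rad (ginv c + ginv (ginv c)) by apply: radD.
have e : g p + g q = g (p + q) + g (c + (ginv c + ginv (ginv c))).
  by rewrite -[RHS]gD_rad; [rewrite !addrA /c -C1 ginvK | apply: radD].
have gc : g (c + (ginv c + ginv (ginv c))) = isum (-1) 2 c.
  rewrite /isum Iint_le // /= !big_cons big_nil addr0 !gD_rad ?ginvK //.
  rewrite addr0 (_ : -1 + 1%:Z = 0) // (_ : -1 + 2%:Z = 1) //.
  by rewrite addrC (addrC c) addrA.
by rewrite e gc -addrA; have [_ ->] := rad2_isum (-1) 2 (rad2_gam p q); rewrite addr0.
Qed.
Lemma ginv_add p q : ginv (p + q) = ginv p + ginv q + isum 0 3 (gam p q).
Proof.
have h := C1 (ginv p) (ginv q); rewrite !ginvK in h; rewrite h -!addrA.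
congr (_ + (_ + _)).
have -> : gam (ginv p) (ginv q) = G 2 (gam p q).
  by rewrite -[ginv p]/(G (-1) p) -[ginv q]/(G (-1) q) gam_gpowl gam_gpowr -gpowD.
rewrite /isum Iint_le // /= !big_cons big_nil !add0r addr0.
by rewrite !gK addrC (addrC (g _)) addrA.
Qed.

Lemma gpow_add k p q :
  G k (p + q) = G k p + G k q + isum (k + 1) (1 - (k + k)) (gam p q).
Proof.
have hw := rad2_gam p q.
have rI a b : rad (isum a b (gam p q)) by case: (rad2_isum a b hw).
have gamGG l : gam (G l p) (G l q) = G (- l + - l) (gam p q).
  by rewrite gam_gpowl gam_gpowr gpowD.
elim/int_ind_step: k => [|k IH|k IH].
- by rewrite (_ : 1 - (0 + 0) = (0:int) + 1) ?isum_nil ?addr0 //; lia.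
- rewrite !gpowS IH gD_rad // g_add gamGG isum_gpow //.
  rewrite -[g (isum _ _ _)]/(G 1 (isum _ _ _)) gpow_isum // -[LHS]addrA.
  congr (_ + _).
  have -> : 2 + (- k + - k) = 1 - (k + k) + 1 by lia.
  by rewrite (isumC (k + 1 + 1)) // isum_cat // isumC //; congr isum; lia.
- rewrite !gpowB1 IH ginvD_rad // ginv_add gamGG isum_gpow //.
  rewrite -[ginv (isum _ _ _)]/(G (-1) (isum _ _ _)) gpow_isum // -[LHS]addrA.
  congr (_ + _).
  have -> : 1 - (k + k) + -1 = 0 + (- k + - k) by lia.
  by rewrite addrC isum_cat //; congr isum; lia.
Qed.

Lemma gpowN k a : G k (- a) = - G k a.
Proof.
apply/eqP; rewrite -addr_eq0; apply/eqP.
have := gpow_add k a (- a); rewrite subrr gpow_zero gamNr galt oppr0.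
have -> : isum (k + 1) (1 - (k + k)) 0 = 0.
  by rewrite /isum big1 // => m _; rewrite gpow_zero.
by rewrite addr0 addrC => <-.
Qed.

Section Evaluation.
Variables (r : int * int * int) (v : nat -> X).

Definition gam_at (pq : nat * nat) := gam (v pq.1) (v pq.2).
Definition eval_pterm (t : pterm) := G (lin_eval r t.1) (v t.2).
Definition eval_gpow (t : gterm) := G (lin_eval r t.1) (gam_at t.2).
Definition eval_isum (t : gterm) := isum 0 (lin_eval r t.1) (gam_at t.2).
Definition eval_body (E : seq pterm * seq gterm) :=
  \sum_(t <- E.1) eval_pterm t + \sum_(t <- E.2) eval_isum t.
Definition eval_nf (A : nf) := (lin_eval r A.1, eval_body A.2).

Lemma rad2_eval_gpow t : rad2 (eval_gpow t).
Proof. exact/rad2_gpow/rad2_gam. Qed.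
Lemma rad2_eval_isum t : rad2 (eval_isum t).
Proof. exact/rad2_isum/rad2_gam. Qed.
Lemma rad_sum_gpow s : rad (\sum_(t <- s) eval_gpow t).
Proof. exact: (proj1 (rad2_sum s rad2_eval_gpow)). Qed.
Lemma rad_sum_isum s : rad (\sum_(t <- s) eval_isum t).
Proof. exact: (proj1 (rad2_sum s rad2_eval_isum)). Qed.

Lemma eval_nf_gam a b : gam (\sum_(t <- a) eval_pterm t) (\sum_(u <- b) eval_pterm u) =
  \sum_(p <- nf_gam a b) eval_gpow p.
Proof.
rewrite /nf_gam big_flatten /= big_map gam_suml; apply: eq_bigr => t _.
rewrite gam_sumr big_map big_filter [RHS]big_mkcond /=; apply: eq_bigr => u _.
rewrite /eval_pterm /eval_gpow gam_gpowl gam_gpowr -gpowD.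
case: eqP => [->|_] /=; first by rewrite galt gpow_zero.
rewrite lin_evalN lin_evalD [in RHS]opprD /gam_at.
by case: (leqP t.2 u.2) => //= _; rewrite gsym.
Qed.

Lemma eval_nf_isum a b ps :
  isum (lin_eval r a) (lin_eval r b) (\sum_(p <- ps) eval_gpow p) =
  \sum_(t <- nf_isum a b ps) eval_isum t.
Proof.
elim: ps => [|p ps IH].
  by rewrite !big_nil /isum big1 // => m _; rewrite gpow_zero.
rewrite big_cons isumD; [|exact (proj1 (rad2_eval_gpow p))|exact: rad_sum_gpow].
rewrite IH /nf_isum /= !big_cons addrA; congr (_ + _).
have hw : rad2 (gam_at p.2) by apply: rad2_gam.
by rewrite /eval_gpow isum_gpow // isum_split // /eval_isum !lin_evalD.
Qed.

Lemma eval_nf_gpow_isums k ss : G (lin_eval r k) (\sum_(t <- ss) eval_isum t) =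
  \sum_(t <- nf_gpow_isums k ss) eval_isum t.
Proof.
elim: ss => [|t ss IH]; first by rewrite !big_nil gpow_zero.
rewrite big_cons gpowD_rad; last exact: rad_sum_isum.
rewrite IH /nf_gpow_isums /= !big_cons addrA.
have hw : rad2 (gam_at t.2) by apply: rad2_gam.
congr (_ + _); rewrite {1}/eval_isum gpow_isum // isum_split // add0r.
by rewrite /eval_isum /= lin_evalD (addrC (lin_eval r k)).
Qed.

Lemma eval_nf_gpow k ps : G (lin_eval r k) (\sum_(t <- ps) eval_pterm t) =
  eval_body (nf_gpow k ps).
Proof.
elim: ps => [|t ps IH]; first by rewrite /eval_body /= !big_nil gpow_zero addr0.
rewrite big_cons gpow_add IH.
have := eval_nf_gam [:: t] ps; rewrite big_seq1 => ->.
have e1 : lin_eval r (lin_add k (lin_const 1)) = lin_eval r k + 1.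
  by rewrite lin_evalD lin_eval_const.
have e2 : lin_eval r (lin_add (lin_const 1) (lin_opp (lin_add k k))) =
          1 - (lin_eval r k + lin_eval r k).
  by rewrite lin_evalD lin_eval_const lin_evalN lin_evalD.
rewrite -e1 -e2 eval_nf_isum /eval_body /= big_cons big_cat /=.
rewrite -!addrA; congr (_ + _); first by rewrite /eval_pterm /= lin_evalD gpowD.
by congr (_ + _); rewrite addrC.
Qed.

Lemma eval_nf_mul A B : raw_mul g ginv gam (eval_nf A) (eval_nf B) = eval_nf (nf_mul A B).
Proof.
case: A => [i [pa sa]]; case: B => [j [pb sb]].
rewrite /eval_nf /raw_mul /nf_mul /=; congr pair; first by rewrite lin_evalD.
rewrite /eval_body /=.
set PA := \sum_(t <- pa) eval_pterm t; set SA := \sum_(t <- sa) eval_isum t.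
set PB := \sum_(t <- pb) eval_pterm t; set SB := \sum_(t <- sb) eval_isum t.
have rSA : rad SA by apply: rad_sum_isum.
have rSB : rad SB by apply: rad_sum_isum.
have -> : gam (PA + SA) (PB + SB) = gam PA PB.
  by rewrite gDl !gDr (rSA PB) (rSA SB) (gam_radr _ rSB) !addr0.
rewrite eval_nf_gam gpowD_rad // -lin_evalN eval_nf_gpow eval_nf_gpow_isums.
set W := \sum_(p <- nf_gam pa pb) eval_gpow p.
have -> : \sum_(k <- Iint (lin_eval r i + lin_eval r j) (lin_eval r (lin_opp j))) G (- k) W =
          isum (1 - (lin_eval r i + lin_eval r j)) (1 + lin_eval r j) W.
  rewrite lin_evalN (sum_Iint_opp (f := fun m => G m W)) ?opprK //.
  by apply: gpow_double; apply: rad2_sum; apply: rad2_eval_gpow.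
have e1 : lin_eval r (lin_add (lin_const 1) (lin_opp (lin_add i j))) =
          1 - (lin_eval r i + lin_eval r j).
  by rewrite lin_evalD lin_eval_const lin_evalN lin_evalD.
have e2 : lin_eval r (lin_add (lin_const 1) j) = 1 + lin_eval r j.
  by rewrite lin_evalD lin_eval_const.
rewrite -e1 -e2 eval_nf_isum /eval_body !big_cat /=.
rewrite -!addrA; congr (_ + _); rewrite [RHS]addrCA; congr (_ + _).
by rewrite addrCA.
Qed.

Lemma eval_body_eqb E E' : nf_body_eqb E E' -> eval_body E = eval_body E'.
Proof.
case/andP => hP hS; rewrite /eval_body (perm_big _ hP); congr (_ + _).
have S2 t : eval_isum t + eval_isum t = 0 by case: (rad2_eval_isum t).
rewrite (bigID (fun t => t.1 != lin_const 0)) [in RHS](bigID (fun t => t.1 != lin_const 0)) /=.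
have S0 s : \sum_(t <- s | ~~ (t.1 != lin_const 0)) eval_isum t = 0.
  apply: big1 => t; rewrite negbK => /eqP e.
  by rewrite /eval_isum e lin_eval_const isum_nil.
have Sc s : \sum_(t <- s | t.1 != lin_const 0) eval_isum t =
    \sum_(t <- cancel_pairs [seq t <- s | t.1 != lin_const 0]) eval_isum t.
  by rewrite sum_cancel_pairs // big_filter.
by rewrite !S0 !addr0 !Sc; apply: perm_big.
Qed.
End Evaluation.

Definition corr (i j : int) (x y : X) := \sum_(m <- Iint (i + j) (- j)) G (- m) (gam x y).

Lemma raw_mulE i j x y :
  raw_mul g ginv gam (i, x) (j, y) = (i + j, G (- j) x + y + corr i j x y).
Proof. by []. Qed.

Lemma rad2_corr i j x y : rad2 (corr i j x y).
Proof. by apply: rad2_sum => m; apply/rad2_gpow/rad2_gam. Qed.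

Lemma corr_radl i j x y : rad x -> corr i j x y = 0.
Proof. by move=> hx; rewrite /corr big1 // => m _; rewrite hx gpow_zero. Qed.
Lemma corr_radr i j x y : rad y -> corr i j x y = 0.
Proof. by move=> hy; rewrite /corr big1 // => m _; rewrite gam_radr ?gpow_zero. Qed.

Lemma corrDr i j x y y' : corr i j x (y + y') = corr i j x y + corr i j x y'.
Proof. by rewrite /corr -big_split; apply: eq_bigr => m _; rewrite gDr gpowD_rad. Qed.

Lemma corrNr i j x y : corr i j x (- y) = - corr i j x y.
Proof. by apply/eqP; rewrite -addr_eq0 -corrDr addNr corr_radr //; apply: rad0. Qed.
Lemma corrC i j x y : corr i j x y = corr i j y x.
Proof. by apply: eq_bigr => m _; rewrite gsym. Qed.

Lemma corr_gpow_self i j k x : corr i j x (G k x) = 0.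
Proof.
by rewrite /corr big1 // => m _; rewrite gam_gpowr galt !gpow_zero.
Qed.

Lemma raw_mul_moufang (i j l : int) (x y z : X) :
  raw_mul g ginv gam (raw_mul g ginv gam (i, x) (j, y)) (raw_mul g ginv gam (l, z) (i, x)) =
  raw_mul g ginv gam (raw_mul g ginv gam (i, x) (raw_mul g ginv gam (j, y) (l, z))) (i, x).
Proof.
pose r := (i, j, l); pose v k := nth 0 [:: x; y; z] k.
have e0 : lin_eval r (0, 0, 0, 0) = 0 by rewrite /lin_eval /=; ring.
have evar (A : nf) w : A = (A.1, ([:: ((0, 0, 0, 0), w)], [::])) ->
    eval_nf r v A = (lin_eval r A.1, v w).
  by move=> ->; rewrite /eval_nf /eval_body /= big_seq1 big_nil addr0 /eval_pterm /= e0.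
have -> : (i, x) = eval_nf r v nf_x by rewrite (evar _ 0%N) // /lin_eval /=; congr pair; ring.
have -> : (j, y) = eval_nf r v nf_y by rewrite (evar _ 1%N) // /lin_eval /=; congr pair; ring.
have -> : (l, z) = eval_nf r v nf_z by rewrite (evar _ 2%N) // /lin_eval /=; congr pair; ring.
rewrite !eval_nf_mul /eval_nf nf_moufang_index.
by rewrite (eval_body_eqb r v nf_moufang_body).
Qed.

Lemma rad_sum_period (d m : nat) : (forall x, rad (\sum_(0 <= k < d) iter k g x)) ->
  (d %| m)%N -> forall x, rad (\sum_(0 <= k < m) iter k g x).
Proof.
move=> hd /dvdnP [c ->] x; elim: c => [|c IH]; first by rewrite mul0n big_geq //; apply: rad0.
rewrite mulSn addnC (big_cat_nat (leq0n (c * d)) (leq_addr d (c * d))) /=.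
apply: radD => //; rewrite -{1}(add0n (c * d)%N) big_addn addKn.
rewrite (eq_bigr (fun k => iter k g (iter (c * d) g x))); first exact: hd.
by move=> k _; rewrite iterD.
Qed.

Section Loop.
Variable n : nat.
Hypothesis gpow_n : forall v, G n%:Z v = v.
Hypothesis rad_sum_n : forall x, rad (\sum_(0 <= k < n) iter k g x).

Local Notation mul := (raw_mul g ginv gam).
Local Notation qmul := (Qmul n g ginv gam).
Local Notation Q := (Qcarrier (X := X) n).

Lemma gpowMn c v : G (c * n%:Z) v = v.
Proof.
elim/int_ind_step: c v => [|c IH|c IH] v; first by rewrite mul0r.
  by rewrite mulrDl mul1r gpowD gpow_n IH.
rewrite mulrBl mul1r gpowD -{2}(IH v); congr (G _ _).
by rewrite -{1}(gpow_n v) gpowK.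
Qed.

Lemma gpowDMn a c v : G (a + c * n%:Z) v = G a v.
Proof. by rewrite addrC gpowD gpowMn. Qed.

Section PeriodicSums.
Variables x y : X.

Definition psum p := \sum_(k <- Iint 0 p) G (- k) (gam x y).

Let gam2 k : G (- k) (gam x y) + G (- k) (gam x y) = 0.
Proof. exact/gpow_double/rad2_gam. Qed.

(* A full period of the g-orbit of [G p x] sums into the radical, as r(g,gam) divides n. *)
Lemma sum_Iint_period p : \sum_(k <- Iint p (p + n%:Z)) G (- k) (gam x y) = 0.
Proof.
rewrite -{1}(add0r p) (addrC p) -(sum_Iint_shift (f := fun k => G (- k) (gam x y))) //.
have -> : \sum_(m <- Iint 0 n%:Z) G (- (m + p)) (gam x y) =
          gam (\sum_(m <- Iint 0 n%:Z) G m (G p x)) y.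
  by rewrite gam_suml; apply: eq_bigr => m _; rewrite !gam_gpowl -gpowD opprD.
rewrite Iint_le // big_map subr0 absz_nat.
have := rad_sum_n (G p x) y; congr (gam _ _ = 0).
by rewrite /index_iota subn0; apply: eq_bigr => k _; rewrite add0r.
Qed.

Lemma sum_Iint_psum a b : \sum_(k <- Iint a b) G (- k) (gam x y) = psum a + psum b.
Proof. exact: sum_Iint_split. Qed.

Lemma psumDn p : psum (p + n%:Z) = psum p.
Proof.
have := sum_Iint_period p; rewrite sum_Iint_psum => /eqP.
rewrite addrC addr_eq0 => /eqP ->; apply/rad2_opp/rad2_sum => k.
exact/rad2_gpow/rad2_gam.
Qed.

Lemma psumDMn p c : psum (p + c * n%:Z) = psum p.
Proof.
elim/int_ind_step: c p => [|c IH|c IH] p; first by rewrite mul0r addr0.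
  by rewrite mulrDl mul1r addrA psumDn IH.
by rewrite -[LHS]psumDn -[RHS](IH p); congr psum; ring.
Qed.
End PeriodicSums.

Lemma eqz_mod_exists (i i' : int) : (i == i' %[mod n%:Z])%Z -> exists c, i' = i + c * n%:Z.
Proof.
rewrite eqz_mod_dvd => /dvdzP [q hq]; exists (- q).
by rewrite mulNr -hq; ring.
Qed.

Lemma raw_mul_wd (i i' j j' : int) (x y : X) :
  (i == i' %[mod n%:Z])%Z -> (j == j' %[mod n%:Z])%Z ->
  ((mul (i, x) (j, y)).1 == (mul (i', x) (j', y)).1 %[mod n%:Z])%Z /\
  (mul (i, x) (j, y)).2 = (mul (i', x) (j', y)).2.
Proof.
move=> /eqz_mod_exists [ci ->] /eqz_mod_exists [cj ->] /=; split.
  rewrite (_ : i + ci * n%:Z + (j + cj * n%:Z) = (ci + cj) * n%:Z + (i + j)); last by ring.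
  by rewrite modzMDl.
rewrite !sum_Iint_psum (_ : - (j + cj * n%:Z) = - j + (- cj) * n%:Z); last by ring.
rewrite (_ : i + ci * n%:Z + (j + cj * n%:Z) = (i + j) + (ci + cj) * n%:Z); last by ring.
by rewrite !psumDMn gpowDMn.
Qed.

Definition eqmod (p q : int * X) := (p.1 %% n)%Z = (q.1 %% n)%Z /\ p.2 = q.2.

Lemma eqmod_sym p q : eqmod p q -> eqmod q p.
Proof. by case. Qed.
Lemma eqmod_trans p q s : eqmod p q -> eqmod q s -> eqmod p s.
Proof. by case=> h1 h2 [h3 h4]; split; [rewrite h1 | rewrite h2]. Qed.
Lemma normC_eqmod p : eqmod (normC n p) p.
Proof. by split => //=; rewrite modz_mod. Qed.
Lemma eqmod_normC p q : eqmod p q -> normC n p = normC n q.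
Proof. by case: p q => [i x] [j y] [/= h <-]; rewrite /normC /= h. Qed.

Lemma raw_mul_eqmod p p' q q' : eqmod p p' -> eqmod q q' -> eqmod (mul p q) (mul p' q').
Proof.
case: p p' q q' => [i x] [i' x'] [j y] [j' y'] [/= hi <-] [/= hj <-].
by have [/eqP h1 h2] := @raw_mul_wd i i' j j' x y (introT eqP hi) (introT eqP hj).
Qed.

Lemma Qmul_raw p q p' q' : eqmod p p' -> eqmod q q' -> qmul p q = normC n (mul p' q').
Proof. by move=> hp hq; apply/eqmod_normC/raw_mul_eqmod. Qed.

Lemma Qcarrier_normC p : Q (normC n p).
Proof. by rewrite /Qcarrier /normC /= modz_mod. Qed.

Lemma Qmul_moufang a b c :
  qmul (qmul a b) (qmul c a) = qmul (qmul a (qmul b c)) a.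
Proof.
have eqmodN p : eqmod p (normC n p) by apply/eqmod_sym/normC_eqmod.
case: a b c => [i x] [j y] [l z].
rewrite (@Qmul_raw _ _ (mul (i, x) (j, y)) (mul (l, z) (i, x))); try exact: normC_eqmod.
rewrite raw_mul_moufang; apply/eqmod_normC/raw_mul_eqmod => //.
by apply: eqmod_trans (eqmodN _); apply: raw_mul_eqmod => //; apply: eqmodN.
Qed.

Lemma Qmul_unitl a : Q a -> qmul (0, 0) a = a.
Proof.
by case: a => [i x] ha; rewrite /Qmul raw_mulE corr_radl ?gpow_zero ?add0r ?addr0 /normC ?ha //; apply: rad0.
Qed.

Lemma Qmul_unitr a : Q a -> qmul a (0, 0) = a.
Proof.
by case: a => [i x] ha; rewrite /Qmul raw_mulE corr_radr ?oppr0 ?addr0 /normC ?ha //; apply: rad0.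
Qed.

Lemma Qmul_left_div a b : Q a -> Q b ->
  exists q, [/\ Q q, qmul a q = b & forall q', Q q' -> qmul a q' = b -> q' = q].
Proof.
case: a b => [i x] [k z]; rewrite /Qcarrier /= => _ hk.
pose j := ((k - i) %% n%:Z)%Z; pose w := z - G (- j) x.
have solve := solve_addr_nilpotent (corrDr i j x)
  (fun t => corr_radr i j x (proj1 (rad2_corr i j x t))) (fun t => (rad2_corr i j x t).2).
have ij : ((i + j) %% n%:Z)%Z = k by rewrite modzDmr addrC subrK.
exists (j, w + corr i j x w); split; first by rewrite /Qcarrier modz_mod.
  rewrite /Qmul raw_mulE /normC /= ij -addrA (proj2 (solve _ _) erefl) /w.
  by rewrite addrC subrK.
case=> [j' y'] /= hj'; rewrite /Qmul raw_mulE /normC /= => [[ij' e]].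
have ej : j' = j by rewrite /j -ij' modzDml (addrC i) addrK hj'.
rewrite ej in e *; congr pair; apply/solve.
by rewrite /w -e -(addrA (G _ _)) (addrC (G _ _)) addrK.
Qed.

Lemma Qmul_right_div a b : Q a -> Q b ->
  exists q, [/\ Q q, qmul q a = b & forall q', Q q' -> qmul q' a = b -> q' = q].
Proof.
case: a b => [i x] [k z]; rewrite /Qcarrier /= => hi hk.
pose j := ((k - i) %% n%:Z)%Z; pose w := z - x; pose h s := corr j i (G i s) x.
have hE s : h s = \sum_(m <- Iint (j + i) (- i)) G (- m) (G (- i) (gam s x)).
  by apply: eq_bigr => m _; rewrite gam_gpowl.
have hD : {morph h : s t / s + t}.
  move=> s t; rewrite !hE -big_split; apply: eq_bigr => m _.
  have r1 := rad_gam t x; have r2 := rad_gpow (- i) r1.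
  by rewrite gDl (gpowD_rad _ _ r1) (gpowD_rad _ _ r2).
have h2 s : rad2 (h s) by apply: rad2_corr.
have solve := solve_addr_nilpotent hD
  (fun t => corr_radl _ _ _ (rad_gpow _ (proj1 (h2 t)))) (fun t => proj2 (h2 t)).
have ji : ((j + i) %% n%:Z)%Z = k by rewrite modzDml subrK.
exists (j, G i (w + h w)); split; first by rewrite /Qcarrier modz_mod.
  rewrite /Qmul raw_mulE /normC /= ji gpowK -/(h _) addrAC (proj2 (solve _ _) erefl) /w.
  by rewrite subrK.
case=> [j' y'] /= hj'; rewrite /Qmul raw_mulE /normC /= => [[ji' e]].
have ej : j' = j by rewrite /j -ji' modzDml addrK hj'.
rewrite ej -(gpowKV i y') in e *; congr (pair _ (G i _)); apply/solve.
by rewrite /w -e gpowK addrAC addrK.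
Qed.

Lemma Qmul_inv i x :
  let inv := normC n (- i, - G i x) in qmul (i, x) inv = (0, 0) /\ qmul inv (i, x) = (0, 0).
Proof.
move=> inv; have eqinv : eqmod inv (- i, - G i x) by apply: normC_eqmod.
split.
- rewrite (@Qmul_raw _ _ (i, x) (- i, - G i x)) // raw_mulE /normC /= subrr mod0z.
  by rewrite opprK corrNr corr_gpow_self oppr0 subrr addr0.
- rewrite (@Qmul_raw _ _ (- i, - G i x) (i, x)) // raw_mulE /normC /= addNr mod0z.
  by rewrite gpowN gpowK corrC corrNr corr_gpow_self oppr0 addNr addr0.
Qed.

Lemma Qmul_moufang_loop : is_moufang_loop Q qmul (0, 0).
Proof.
split; last by move=> a b c _ _ _; apply: Qmul_moufang.
split.
- by rewrite /Qcarrier /= mod0z.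
- by move=> a b _ _; apply: Qcarrier_normC.
- by move=> a ha; split; [apply: Qmul_unitl | apply: Qmul_unitr].
- exact: Qmul_left_div.
- exact: Qmul_right_div.
Qed.
End Loop.
End ConstructionPair.

Unset Implicit Arguments.
Set Strict Implicit.

Theorem mainTheorem2 (X : zmodType) (g ginv : X -> X) (gam : X -> X -> X) (n : nat) :
  construction_pair g ginv gam ->
  ((0 < n)%N ->
     (exists d, perm_order_is g d /\ (d %| n)%N) /\
     (exists r, r_is g gam r /\ (r %| n)%N)) ->
  (forall (i i' j j' : int) (x y : X),
     (i == i' %[mod n%:Z])%Z -> (j == j' %[mod n%:Z])%Z ->
     ((raw_mul g ginv gam (i, x) (j, y)).1 ==
        (raw_mul g ginv gam (i', x) (j', y)).1 %[mod n%:Z])%Z /\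
     (raw_mul g ginv gam (i, x) (j, y)).2 = (raw_mul g ginv gam (i', x) (j', y)).2) /\
  is_moufang_loop (Qcarrier (X := X) n) (Qmul n g ginv gam) (0, 0) /\
  (forall i x, Qcarrier n (i, x) ->
     let inv := normC n (- i, - gpow g ginv i x) in
     Qmul n g ginv gam (i, x) inv = (0, 0) /\ Qmul n g ginv gam inv (i, x) = (0, 0)).
Proof.
case=> [[gK ginvK] [gsym [galt [gDl gDr]]] C1 C2 C3] hn.
have gpow_n v : gpow g ginv n%:Z v = v.
  case: n hn => [//|m] /(_ erefl) [[d [[_ [gd _]] dn]] _].
  exact: (iter_period gd dn v).
have rad_sum_n x : Rad gam (\sum_(0 <= k < n) iter k g x).
  case: n hn {gpow_n} => [_|m /(_ erefl) [_ [r [[_ [gr _]] rn]]]].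
    by rewrite big_geq //; apply: rad0.
  exact: rad_sum_period gr rn x.
split; [|split].
- by move=> i i' j j' x y; apply: raw_mul_wd.
- by apply: Qmul_moufang_loop.
- by move=> i x _; apply: Qmul_inv.
Qed.
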